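(* Let $n_d>2$ be an odd integer, $\mu=\frac{n_d-1}{2}$, and $\delta\in(0,1/n_d]$. Let $\varepsilon^*\ge0$ be the unique non-negative real with $\delta\sum_{x=0}^{n_d-1}e^{\varepsilon^*(\mu-|x-\mu|)}=1$. Then the distribution $P^*$ on $\{0,\dots,n_d-1\}$ given by $P^*(x)=\delta e^{\varepsilon^*(\mu-|x-\mu|)}$ (a truncated discrete Laplace distribution $P^*(x)=A e^{-\varepsilon^*|x-\mu|}$ with normalizing constant $A$) satisfies $H_{\varepsilon^*}(P^*\|P^*_+)\le\delta$ and $H_{\varepsilon^*}(P^*_+\|P^* )\le\delta$; every distribution $X$ on $\{0,\dots,n_d-1\}$ with $H_{\varepsilon}(X\|X_+)\le\delta$ and $H_{\varepsilon}(X_+\|X)\le\delta$ has $\varepsilon\ge\varepsilon^*$; and $P^*$ is the unique distribution on $\{0,\dots,n_d-1\}$ achieving this with $\varepsilon=\varepsilon^*$. Furthermore, when $\delta\in(1/n_d,1]$, the minimum such $\varepsilon$ is $0$, attained by the uniform distribution on $\{0,\dots,n_d-1\}$.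
   Context: For a distribution $X$ on $\mathbb{Z}$, $X_+$ is its shift by one, $X_+(x)=X(x-1)$. The hockey-stick divergence is $H_\varepsilon(P\|Q)=\sum_x[P(x)-e^\varepsilon Q(x)]_+$, where $[t]_+=\max\{t,0\}$. The additive noise mechanism with noise $X$ (release $n+Z$, $Z\sim X$) is $(\varepsilon,\delta)$-DP for neighboring counts differing by one iff $H_\varepsilon(X\|X_+)\le\delta$ and $H_\varepsilon(X_+\|X)\le\delta$. *)

From mathcomp Require Import all_boot all_order all_algebra.
From mathcomp Require Import all_classical all_reals all_analysis.
Set Implicit Arguments. Unset Strict Implicit. Unset Printing Implicit Defensive.
Import Order.TTheory GRing.Theory Num.Theory.
Local Open Scope ring_scope.

(* A (probability) distribution on Z supported in {0,...,n-1}.  We represent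
   it by its mass function on nat; the mass at negative integers is 0. *)
Definition is_dist {R : realType} (n : nat) (X : nat -> R) : Prop :=
  (forall x, 0 <= X x) /\ (forall x, (n <= x)%N -> X x = 0) /\
  \sum_(x < n) X x = 1.

(* Shift by one: X_+(x) = X(x-1) (and X_+(0) = X(-1) = 0). *)
Definition shift {R : realType} (X : nat -> R) : nat -> R :=
  fun x => if x is k.+1 then X k else 0.

(* Hockey-stick divergence H_eps(P||Q) = sum_x [P x - e^eps Q x]_+ for mass
   functions P, Q on Z vanishing outside {0,...,N-1}; all other terms are 0. *)
Definition hockey {R : realType} (N : nat) (eps : R) (P Q : nat -> R) : R :=
  \sum_(x < N) Num.max (P x - expR eps * Q x) 0.

(* The additive noise mechanism with noise X (supported in {0,...,n-1}) is
   (eps,delta)-DP for neighboring counts.  Both X and X_+ vanish outside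
   {0,...,n}, so summing over x < n.+1 is the full sum over Z. *)
Definition dp_noise {R : realType} (n : nat) (eps delta : R) (X : nat -> R) : Prop :=
  hockey n.+1 eps X (shift X) <= delta /\ hockey n.+1 eps (shift X) X <= delta.

Definition Pstar {R : realType} (n : nat) (eps delta : R) : nat -> R :=
  let mu : R := (n%:R - 1) / 2 in
  fun x => if (x < n)%N then delta * expR (eps * (mu - `|x%:R - mu|)) else 0.

Definition normalizes {R : realType} (n : nat) (eps delta : R) : Prop :=
  let mu : R := (n%:R - 1) / 2 in
  delta * \sum_(x < n) expR (eps * (mu - `|(x : nat)%:R - mu|)) = 1.

Definition uniform {R : realType} (n : nat) : nat -> R :=
  fun x => if (x < n)%N then n%:R^-1 else 0.

From Pilot Require Import Defs.
From mathcomp Require Import all_boot all_order all_algebra.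
From mathcomp Require Import all_classical all_reals all_analysis.
From mathcomp Require Import lra zify.
Import Order.TTheory GRing.Theory Num.Theory.
Import numFieldNormedType.Exports.
Set Implicit Arguments. Unset Strict Implicit.
Local Open Scope ring_scope.

(* Every hockey-stick term of X against X_+ dominates X(x) - e^eps X(x-1), so
   unrolling this recursion from the left end gives X(k) <= delta e^(eps k), and
   unrolling the mirrored recursion from the right end, where X vanishes, gives
   X(k) <= delta e^(eps (n-1-k)).  Hence every (eps,delta)-DP noise X satisfies
   X <= P*_eps pointwise.  Summing, 1 <= delta * sum_x e^(eps min(x, n-1-x)),
   which is strictly increasing in eps: this forces eps >= eps*, and at
   eps = eps* both X and P* have mass 1, so X = P*.  Conversely P* is DP since
   its logarithm is eps-Lipschitz and its two end values equal delta, so only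
   the two boundary hockey-stick terms survive, each equal to delta. *)

Section LaplaceNoise.
Variable R : realType.
Implicit Types (eps delta : R) (X : nat -> R).

Lemma le_add_max_sub (a b : R) : a <= b + Num.max (a - b) 0.
Proof. by rewrite -lerBlDl le_max lexx. Qed.

Lemma sum_ord_prefix_le (f : nat -> R) n m : (forall i, 0 <= f i) -> (n <= m)%N ->
  \sum_(i < n) f i <= \sum_(i < m) f i.
Proof.
move=> f_ge0 nm; rewrite (big_ord_widen _ f nm) [leRHS](bigID (fun i : 'I_m => i < n)%N).
by rewrite lerDl sumr_ge0.
Qed.

Lemma sum_eq_le_eq (I : finType) (F G : I -> R) :
  (forall i, F i <= G i) -> \sum_i F i = \sum_i G i -> forall i, F i = G i.
Proof.
move=> FG sumFG i; apply/eqP; rewrite eq_sym -subr_eq0; apply/eqP.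
apply: (@psumr_eq0P _ _ xpredT (fun i => G i - F i)) => // [j _|].
  by rewrite subr_ge0.
by rewrite sumrB sumFG subrr.
Qed.

Lemma growth_le_expR_sum eps (u t : nat -> R) K : 0 <= eps ->
  (forall k, 0 <= t k) -> u 0 <= t 0 ->
  (forall k, (k < K)%N -> u k.+1 <= expR eps * u k + t k.+1) ->
  forall k, (k <= K)%N -> u k <= expR (eps * k%:R) * \sum_(i < k.+1) t i.
Proof.
move=> eps_ge0 t_ge0 u0 step; elim=> [_|k IH kK].
  by rewrite mulr0 expR0 mul1r big_ord1.
have expS : expR (eps * k.+1%:R) = expR eps * expR (eps * k%:R).
  by rewrite -expRD -natr1 mulrDr mulr1 addrC.
have exp_ge1 : 1 <= expR (eps * k.+1%:R) by rewrite -expR0 ler_expR mulr_ge0.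
rewrite big_ord_recr /= mulrDr; apply: (le_trans (step k kK)); apply: lerD.
  by rewrite expS -mulrA ler_wpM2l ?expR_ge0 ?IH // ltnW.
by rewrite ler_peMl.
Qed.

Lemma le_expR_hockey_shift eps X N k : 0 <= eps -> (k < N.+1)%N ->
  X k <= expR (eps * k%:R) * hockey N.+1 eps X (Defs.shift X).
Proof.
move=> eps_ge0 kN; set t := fun x => Num.max (X x - expR eps * Defs.shift X x) 0.
have t_ge0 i : 0 <= t i by rewrite le_max lexx orbT.
have X0 : X 0 <= t 0 by rewrite /t /= mulr0 subr0 le_max lexx.
have step j : (j < k)%N -> X j.+1 <= expR eps * X j + t j.+1.
  by move=> _; exact: le_add_max_sub.
apply: (le_trans (@growth_le_expR_sum eps X t k eps_ge0 t_ge0 X0 step k (leqnn k))).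
by rewrite ler_wpM2l ?expR_ge0 // sum_ord_prefix_le.
Qed.

Lemma le_expR_hockey_unshift eps X N k : 0 <= eps -> X N = 0 -> (k < N)%N ->
  X k <= expR (eps * (N.-1 - k)%:R) * hockey N.+1 eps (Defs.shift X) X.
Proof.
move=> eps_ge0 XN kN; set t := fun x => Num.max (Defs.shift X x - expR eps * X x) 0.
set u := fun j => X (N.-1 - j)%N; set s := fun i => t (N - i)%N.
have s_ge0 i : 0 <= s i by rewrite /s /t le_max lexx orbT.
have u0 : u 0 <= s 0.
  rewrite /u /s /t !subn0 XN mulr0 subr0.
  have -> : Defs.shift X N = X N.-1 by rewrite [in LHS](_ : N = N.-1.+1) //; lia.
  by rewrite le_max lexx.
have step j : (j < N.-1)%N -> u j.+1 <= expR eps * u j + s j.+1.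
  move=> jN; rewrite /u /s; have -> : (N - j.+1 = (N.-1 - j.+1).+1)%N by lia.
  have -> : (N.-1 - j = (N.-1 - j.+1).+1)%N by lia.
  exact: le_add_max_sub.
have kK : (N.-1 - k <= N.-1)%N by lia.
have := @growth_le_expR_sum eps u s N.-1 eps_ge0 s_ge0 u0 step _ kK.
have -> : u (N.-1 - k)%N = X k by rewrite /u; congr X; lia.
move/le_trans; apply; rewrite ler_wpM2l ?expR_ge0 //.
have -> : hockey N.+1 eps (Defs.shift X) X = \sum_(i < N.+1) s i.
  rewrite /hockey -(big_mkord xpredT t) big_rev_mkord subn0.
  by apply: eq_bigr => i _; rewrite subSS.
by rewrite sum_ord_prefix_le //; lia.
Qed.

Lemma natr_pred N : (0 < N)%N -> (N.-1%:R : R) = N%:R - 1.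
Proof. by move=> N_gt0; rewrite -{2}(prednK N_gt0) -natr1 addrK. Qed.

Definition tent (N x : nat) : R :=
  let mu : R := (N%:R - 1) / 2 in mu - `|x%:R - mu|.

Lemma tent_cases N x : tent N x = x%:R \/ tent N x = N%:R - 1 - x%:R.
Proof.
by rewrite /tent; case: (lerP ((N%:R - 1) / 2) (x%:R : R)) => h; [right|left]; lra.
Qed.

Lemma tent_lipschitz N a b : tent N a <= tent N b + `|a%:R - b%:R|.
Proof.
rewrite /tent /=; set mu : R := (N%:R - 1) / 2.
have := ler_distD (a%:R : R) b%:R mu.
by rewrite (distrC (b%:R : R) a%:R); lra.
Qed.

Lemma tent_ge0 N x : (x < N)%N -> 0 <= tent N x.
Proof.
move=> xN; have : (x%:R : R) <= N%:R - 1 by rewrite lerBrDr natr1 ler_nat.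
by case: (tent_cases N x) => ->; rewrite ?ler0n //; lra.
Qed.

Lemma tent0 N : (0 < N)%N -> tent N 0 = 0.
Proof.
by move=> N_gt0; rewrite /tent sub0r normrN ger0_norm ?subrr // divr_ge0 // subr_ge0 ler1n.
Qed.

Lemma tent_last N : (0 < N)%N -> tent N N.-1 = 0.
Proof.
move=> N_gt0; have N_ge1 : (1 : R) <= N%:R by rewrite ler1n.
by rewrite /tent /= natr_pred // ger0_norm; lra.
Qed.

Lemma tent1 N : (2 < N)%N -> tent N 1 = 1.
Proof.
move=> N_gt2; have : (3 : R) <= N%:R by rewrite ler_nat.
by rewrite /tent /= => N_ge3; rewrite ler0_norm; lra.
Qed.

Definition laplace_mass N eps : R := \sum_(x < N) expR (eps * tent N x).

Lemma PstarE N eps delta x :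
  Pstar N eps delta x = if (x < N)%N then delta * expR (eps * tent N x) else 0.
Proof. by []. Qed.

Lemma normalizesE N eps delta :
  normalizes N eps delta <-> delta * laplace_mass N eps = 1.
Proof. exact: iff_refl. Qed.

Lemma sum_Pstar N eps delta :
  \sum_(x < N) Pstar N eps delta x = delta * laplace_mass N eps.
Proof. by rewrite /laplace_mass mulr_sumr; apply: eq_bigr => x _; rewrite PstarE ltn_ord. Qed.

Lemma Pstar_ge0 N eps delta x : 0 <= delta -> 0 <= Pstar N eps delta x.
Proof. by move=> delta_ge0; rewrite PstarE; case: ifP; rewrite ?mulr_ge0 ?expR_ge0. Qed.

Lemma is_dist_Pstar N eps delta : 0 <= delta -> delta * laplace_mass N eps = 1 ->
  is_dist N (Pstar N eps delta).
Proof.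
move=> delta_ge0 mass1; split; first by move=> x; exact: Pstar_ge0.
by split=> [x Nx|]; rewrite ?sum_Pstar // PstarE ltnNge Nx.
Qed.

Lemma dp_noise_le_Pstar N eps delta X k : 0 <= eps -> is_dist N X ->
  dp_noise N eps delta X -> (k < N)%N -> X k <= Pstar N eps delta k.
Proof.
move=> eps_ge0 [_ [X_out _]] [dpX dpXs] kN; rewrite PstarE kN.
have scale E H : 0 <= E -> X k <= E * H -> H <= delta -> X k <= delta * E.
  by move=> E_ge0 XkE Hd; rewrite mulrC (le_trans XkE) // ler_wpM2l.
case: (tent_cases N k) => ->.
  exact: scale (expR_ge0 _) (@le_expR_hockey_shift eps X N k eps_ge0 (ltnW kN)) dpX.
have := @le_expR_hockey_unshift eps X N k eps_ge0 (X_out N (leqnn N)) kN.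
have -> : ((N.-1 - k)%N%:R : R) = N%:R - 1 - k%:R.
  by rewrite natrB ?natr_pred //; lia.
by move/scale; apply; rewrite ?expR_ge0.
Qed.

Lemma dp_noise_laplace_mass_ge1 N eps delta X : 0 <= eps -> is_dist N X ->
  dp_noise N eps delta X -> 1 <= delta * laplace_mass N eps.
Proof.
move=> eps_ge0 distX dpX; have [_ [_ <-]] := distX.
by rewrite -sum_Pstar; apply: ler_sum => k _; exact: dp_noise_le_Pstar.
Qed.

(* [X <= Pstar] pointwise, and both have mass 1. *)
Lemma dp_noise_eq_Pstar N eps delta X : 0 <= eps -> delta * laplace_mass N eps = 1 ->
  is_dist N X -> dp_noise N eps delta X -> forall x, X x = Pstar N eps delta x.
Proof.
move=> eps_ge0 mass1 distX dpX x; have [_ [X_out sumX]] := distX.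
case: (ltnP x N) => [xN|Nx]; last by rewrite PstarE ltnNge Nx X_out.
apply: (@sum_eq_le_eq _ (fun i : 'I_N => X i) (fun i => Pstar N eps delta i) _ _
  (Ordinal xN)).
  by move=> i; exact: dp_noise_le_Pstar.
by rewrite sumX sum_Pstar.
Qed.

Lemma laplace_mass0 N : laplace_mass N 0 = N%:R.
Proof.
rewrite /laplace_mass (eq_bigr (fun=> 1)) => [|i _]; last by rewrite mul0r expR0.
by rewrite sumr_const card_ord.
Qed.

Lemma laplace_mass_increasing N : (2 < N)%N -> {homo laplace_mass N : a b / a < b}.
Proof.
move=> N_gt2 a b ab; have i1 : (1 < N)%N by lia.
rewrite /laplace_mass (bigD1 (Ordinal i1)) // [ltRHS](bigD1 (Ordinal i1)) //=.
rewrite tent1 // !mulr1 ltr_leD ?ltr_expR //.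
by apply: ler_sum => i _; rewrite ler_expR ler_wpM2r ?tent_ge0 ?ltW.
Qed.

Lemma expR_le_laplace_mass N eps : (2 < N)%N -> expR eps <= laplace_mass N eps.
Proof.
move=> N_gt2; have i1 : (1 < N)%N by lia.
rewrite /laplace_mass (bigD1 (Ordinal i1)) //= tent1 // mulr1 lerDl.
by apply: sumr_ge0 => i _; exact: expR_ge0.
Qed.

Lemma continuous_laplace_mass N : continuous (laplace_mass N).
Proof.
change (continuous (fun e : R => \sum_(x < N) expR (e * tent N x))).
apply: (@continuous_big R 'I_N +%R 0 xpredT add_continuous R _
  (fun i e => expR (e * tent N i))) => i _ e.
apply: (@continuous_comp _ _ _ (fun e : R => e * tent N i) expR); last exact: continuous_expR.
by apply: continuousM; [exact: id | exact: cst_continuous].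
Qed.

Lemma exists_normalizing_eps N delta : (2 < N)%N -> 0 < delta ->
  delta * N%:R <= 1 -> exists2 eps, 0 <= eps & delta * laplace_mass N eps = 1.
Proof.
move=> N_gt2 delta_gt0 small.
have large : 1 <= delta * laplace_mass N delta^-1.
  have exp_le := le_trans (expR_ge1Dx delta^-1) (expR_le_laplace_mass delta^-1 N_gt2).
  have := ler_wpM2l (ltW delta_gt0) exp_le.
  by rewrite mulrDr mulr1 mulfV ?gt_eqF //; lra.
have mass_cont :
    {within `[0, delta^-1], continuous (fun e => delta * laplace_mass N e)}%classic.
  apply: continuous_subspaceT => e.
  by apply: continuousM; [exact: cst_continuous | exact: continuous_laplace_mass].
have inv_ge0 : 0 <= delta^-1 by rewrite invr_ge0 ltW.
have [|e] := @IVT R _ _ _ 1 inv_ge0 mass_cont.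
  by rewrite laplace_mass0 ge_min le_max small large orbT.
by rewrite in_itv /= => /andP[e_ge0 _] mass1; exists e.
Qed.

Lemma dp_noise_of_neighbour_ratio N eps delta X : (0 < N)%N -> X N = 0 ->
  (forall x, 0 <= X x) ->
  (forall k, (k.+1 < N)%N -> X k.+1 <= expR eps * X k /\ X k <= expR eps * X k.+1) ->
  X 0 <= delta -> X N.-1 <= delta -> dp_noise N eps delta X.
Proof.
case: N => // n _ Xn X_ge0 ratio X0 Xlast; split; rewrite /hockey.
- rewrite big_ord_recl /= mulr0 subr0 big1 => [|i _].
    by rewrite max_l ?X_ge0 // addr0.
  rewrite /bump leq0n add0n /=; apply: max_r; rewrite subr_le0 add1n.
  have [iN|iN] := ltnP i.+1 n.+1; first exact: (ratio _ iN).1.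
  have -> : i.+1 = n.+1 by have := ltn_ord i; lia.
  by rewrite Xn mulr_ge0 // expR_ge0.
- rewrite big_ord_recr /= Xn mulr0 subr0 big1 => [|[[|k] kN] _] /=.
  + by rewrite max_l ?X_ge0 // add0r.
  + by apply: max_r; rewrite sub0r oppr_le0 mulr_ge0 // expR_ge0.
  + by apply: max_r; rewrite subr_le0; exact: (ratio _ kN).2.
Qed.

Lemma dp_noise_Pstar N eps delta : (0 < N)%N -> 0 <= eps -> 0 <= delta ->
  dp_noise N eps delta (Pstar N eps delta).
Proof.
move=> N_gt0 eps_ge0 delta_ge0; apply: dp_noise_of_neighbour_ratio => //.
- by rewrite PstarE ltnn.
- by move=> x; exact: Pstar_ge0.
- have step a b : tent N a <= tent N b + `|a%:R - b%:R| -> `|a%:R - b%:R : R| = 1 ->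
      delta * expR (eps * tent N a) <= expR eps * (delta * expR (eps * tent N b)).
    move=> lip ab1; rewrite mulrCA -expRD ler_wpM2l // ler_expR.
    by rewrite -[X in X + _]mulr1 -mulrDr ler_wpM2l // addrC -ab1.
  move=> k kN; have near : `|k%:R - k.+1%:R : R| = 1.
    by rewrite -natr1 opprD addNKr normrN normr1.
  rewrite !PstarE kN (ltnW kN); split; apply: step; rewrite ?tent_lipschitz //.
  by rewrite distrC.
- by rewrite PstarE N_gt0 tent0 // mulr0 expR0 mulr1.
- by rewrite PstarE ltn_predL N_gt0 tent_last // mulr0 expR0 mulr1.
Qed.

Lemma is_dist_uniform N : (0 < N)%N -> is_dist N (uniform (R:=R) N).
Proof.
move=> N_gt0; split=> [x|]; first by rewrite /uniform; case: ifP; rewrite ?invr_ge0.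
split=> [x Nx|]; first by rewrite /uniform ltnNge Nx.
rewrite (eq_bigr (fun=> N%:R^-1)) => [|i _]; last by rewrite /uniform ltn_ord.
by rewrite sumr_const card_ord -[LHS]mulr_natr mulVf // pnatr_eq0 -lt0n.
Qed.

Lemma dp_noise_uniform N delta : (0 < N)%N -> N%:R^-1 <= delta ->
  dp_noise N 0 delta (uniform (R:=R) N).
Proof.
move=> N_gt0 delta_large; apply: dp_noise_of_neighbour_ratio => //.
- by rewrite /uniform ltnn.
- by move=> x; rewrite /uniform; case: ifP; rewrite ?invr_ge0.
- by move=> k kN; rewrite /uniform expR0 !mul1r kN (ltnW kN).
- by rewrite /uniform N_gt0.
- by rewrite /uniform ltn_predL N_gt0.
Qed.

End LaplaceNoise.

Theorem mainTheorem14 (R : realType) (nd : nat) (delta : R) :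
  odd nd -> (2 < nd)%N ->
  ((0 < delta <= nd%:R^-1) ->
     (exists! e : R, 0 <= e /\ normalizes nd e delta) /\
     forall epsS : R, 0 <= epsS -> normalizes nd epsS delta ->
       [/\ is_dist nd (Pstar nd epsS delta),
           dp_noise nd epsS delta (Pstar nd epsS delta),
           (forall (X : nat -> R) (eps : R), 0 <= eps ->
              is_dist nd X -> dp_noise nd eps delta X -> epsS <= eps) &
           (forall X : nat -> R, is_dist nd X -> dp_noise nd epsS delta X ->
              forall x, X x = Pstar nd epsS delta x)]) /\
  ((nd%:R^-1 < delta <= 1) ->
     is_dist nd (uniform (R:=R) nd) /\ dp_noise nd 0 delta (uniform (R:=R) nd)).
Proof.
move=> _ nd_gt2; have nd_gt0 : (0 < nd)%N by lia.
split=> [/andP[delta_gt0 delta_small] | /andP[delta_large _]]; last first.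
  by split; [exact: is_dist_uniform | apply: dp_noise_uniform => //; exact: ltW].
have small : delta * nd%:R <= 1 by rewrite -ler_pdivlMr ?ltr0n // div1r.
have mass_mono := le_mono (laplace_mass_increasing (R:=R) nd_gt2).
split.
  have [e e_ge0 mass1] := exists_normalizing_eps nd_gt2 delta_gt0 small.
  exists e; split=> [|e' [_ /normalizesE mass1']]; first by split=> //; apply/normalizesE.
  by move: mass1; rewrite -mass1' => /(mulfI (lt0r_neq0 delta_gt0))/(inc_inj mass_mono).
move=> epsS epsS_ge0 /normalizesE mass1; split.
- exact: is_dist_Pstar (ltW delta_gt0) mass1.
- exact: dp_noise_Pstar nd_gt0 epsS_ge0 (ltW delta_gt0).
- move=> X eps eps_ge0 distX dpX.
  rewrite -mass_mono -(ler_pM2l delta_gt0) mass1.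
  exact: dp_noise_laplace_mass_ge1 eps_ge0 distX dpX.
- by move=> X; exact: dp_noise_eq_Pstar epsS_ge0 mass1.
Qed.
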